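(* Let $n$ be an odd prime and $\omega_n=e^{2\pi i/n}$. Define $$A_n=\{\Re(\omega_n),\Re(\omega_n^2),\dots,\Re(\omega_n^{(n-1)/2})\},\qquad B_n=\{i\,\Im(\omega_n), i\,\Im(\omega_n^2),\dots,i\,\Im(\omega_n^{(n-1)/2})\}.$$ Then $A_n\cup B_n$ is a basis for the cyclotomic field $\mathbb{Q}(\omega_n)$ as a vector space over $\mathbb{Q}$.
   Context: $\Re$ and $\Im$ denote real and imaginary parts of a complex number. *)

From HB Require Import structures.
From mathcomp Require Import all_boot all_order all_algebra.
From mathcomp Require Import reals trigo.
From mathcomp Require Import complex.
Set Implicit Arguments. Unset Strict Implicit. Unset Printing Implicit Defensive.
Import Order.TTheory GRing.Theory Num.Theory.
Local Open Scope ring_scope.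
Local Open Scope complex_scope.

Definition omega (R : realType) (n : nat) : R[i] :=
  (cos (2 * pi / n%:R)) +i* (sin (2 * pi / n%:R)).

Definition is_subfield (R : realType) (K : R[i] -> Prop) : Prop :=
  K 0 /\ K 1 /\
  (forall x y, K x -> K y -> K (x + y)) /\
  (forall x, K x -> K (- x)) /\
  (forall x y, K x -> K y -> K (x * y)) /\
  (forall x, K x -> x != 0 -> K (x^-1)).

Definition Qadj (R : realType) (z : R[i]) : R[i] -> Prop :=
  fun x => forall K, is_subfield K -> K z -> K x.

Definition is_Q_basis (R : realType) (V : R[i] -> Prop) (m : nat) (b : 'I_m -> R[i]) : Prop :=
  [/\ (forall j, V (b j)),
      (forall c : 'I_m -> rat, \sum_(j < m) ratr (c j) * b j = 0 -> forall j, c j = 0) &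
      (forall x, V x -> exists c : 'I_m -> rat, x = \sum_(j < m) ratr (c j) * b j)].

(* The family A_n u B_n, indexed by 'I_((n-1)/2) + 'I_((n-1)/2) flattened:
   index j < (n-1)/2 gives Re(omega^(j+1)), index (n-1)/2 + j gives i Im(omega^(j+1)). *)
Definition AB_family (R : realType) (n : nat) (k : 'I_(n.-1./2 + n.-1./2)) : R[i] :=
  match split k with
  | inl j => (complex.Re (omega R n ^+ j.+1))%:C
  | inr j => 'i * (complex.Im (omega R n ^+ j.+1))%:C
  end.

From HB Require Import structures.
From mathcomp Require Import all_boot all_order all_algebra all_field.
From mathcomp Require Import reals trigo complex ring lra zify.
Set Implicit Arguments. Unset Strict Implicit. Unset Printing Implicit Defensive.
Import Order.TTheory GRing.Theory Num.Theory.
Local Open Scope ring_scope.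

(* Since n is prime, 1 + X + ... + X^(n-1) is irreducible over Q: a complex root
   of it is a primitive n-th root of unity, whose minimal polynomial is the
   cyclotomic polynomial of degree n - 1.  Hence Q(w) = Q[w] is spanned by
   w, ..., w^(n-1), and these powers are Q-free.  For 1 <= j <= (n-1)/2 the powers
   w^j and w^(n-j) are complex conjugate, i.e. equal to Re w^j +- i Im w^j, and this
   change of basis is invertible over Q. *)

Definition pair_family (T : Type) m (u v : 'I_m -> T) (k : 'I_(m + m)) : T :=
  match split k with inl j => u j | inr j => v j end.

Lemma pair_familyE T m (u v : 'I_m -> T) (s : 'I_m + 'I_m) :
  pair_family u v (unsplit s) = match s with inl j => u j | inr j => v j end.
Proof. by rewrite /pair_family unsplitK. Qed.

Lemma pair_family_lshift T m (u v : 'I_m -> T) j : pair_family u v (lshift m j) = u j.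
Proof. exact: (pair_familyE u v (inl j)). Qed.

Lemma pair_family_rshift T m (u v : 'I_m -> T) j : pair_family u v (rshift m j) = v j.
Proof. exact: (pair_familyE u v (inr j)). Qed.

Section RationalSpan.
Variable F : numFieldType.

Definition Qspan m (b : 'I_m -> F) (x : F) : Prop :=
  exists c : 'I_m -> rat, x = \sum_(j < m) ratr (c j) * b j.

Definition Q_free m (b : 'I_m -> F) : Prop :=
  forall c : 'I_m -> rat, \sum_(j < m) ratr (c j) * b j = 0 -> forall j, c j = 0.

Variables (m : nat) (b : 'I_m -> F).

Lemma Qspan0 : Qspan b 0.
Proof. by exists (fun=> 0); rewrite big1 // => j _; rewrite rmorph0 mul0r. Qed.

Lemma QspanD x y : Qspan b x -> Qspan b y -> Qspan b (x + y).
Proof.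
move=> [c ->] [d ->]; exists (fun j => c j + d j).
by rewrite -big_split; apply: eq_bigr => j _; rewrite rmorphD mulrDl.
Qed.

Lemma QspanZ q x : Qspan b x -> Qspan b (ratr q * x).
Proof.
move=> [c ->]; exists (fun j => q * c j).
by rewrite mulr_sumr; apply: eq_bigr => j _; rewrite rmorphM mulrA.
Qed.

Lemma QspanB x y : Qspan b x -> Qspan b y -> Qspan b (x - y).
Proof.
move=> Sx /(QspanZ (-1)); rewrite rmorphN rmorph1 mulN1r; exact: QspanD.
Qed.

Lemma Qspan_sum I (r : seq I) (P : pred I) (f : I -> F) :
  (forall i, P i -> Qspan b (f i)) -> Qspan b (\sum_(i <- r | P i) f i).
Proof. by move=> Sf; apply: big_ind => //; [apply: Qspan0 | apply: QspanD]. Qed.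

Lemma Qspan_gen j : Qspan b (b j).
Proof.
exists (fun i => (i == j)%:R); rewrite (bigD1 j) //= eqxx rmorph1 mul1r.
by rewrite big1 ?addr0 // => i /negPf->; rewrite rmorph0 mul0r.
Qed.

Lemma Qspan_trans m' (b' : 'I_m' -> F) x :
  (forall j, Qspan b (b' j)) -> Qspan b' x -> Qspan b x.
Proof. by move=> Sb' [c ->]; apply: Qspan_sum => j _; apply: QspanZ. Qed.

End RationalSpan.

Section SumDifference.
Variables (F : numFieldType) (m : nat) (u v : 'I_m -> F) (b : 'I_(m + m) -> F).
Hypotheses (b_sum : forall j, b (lshift m j) = u j + v j)
           (b_diff : forall j, b (rshift m j) = u j - v j).

Lemma Qspan_sum_diff x : Qspan b x -> Qspan (pair_family u v) x.
Proof.
have Su j : Qspan (pair_family u v) (u j).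
  by rewrite -(pair_family_lshift u v); apply: Qspan_gen.
have Sv j : Qspan (pair_family u v) (v j).
  by rewrite -(pair_family_rshift u v); apply: Qspan_gen.
apply: Qspan_trans => k; rewrite -(splitK k); case: (split k) => j.
  by rewrite b_sum; apply: QspanD.
by rewrite b_diff; apply: QspanB.
Qed.

Lemma Q_free_sum_diff : Q_free b -> Q_free (pair_family u v).
Proof.
move=> free_b c c_uv.
pose cu j := c (lshift m j); pose cv j := c (rshift m j).
pose c' := pair_family (fun j => (cu j + cv j) / 2) (fun j => (cu j - cv j) / 2).
have /free_b c'0 : \sum_(k < m + m) ratr (c' k) * b k = 0.
  rewrite -[RHS]c_uv !big_split_ord /= -!big_split /=.
  apply: eq_bigr => j _; rewrite /c' !pair_family_lshift !pair_family_rshift.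
  by rewrite b_sum b_diff /cu /cv !fmorph_div rmorphD rmorphB /= rmorph_nat; field.
have cuv0 j : cu j = 0 /\ cv j = 0.
  have := c'0 (lshift m j); have := c'0 (rshift m j).
  rewrite /c' pair_family_lshift pair_family_rshift /cu /cv; split; lra.
move=> k; rewrite -(splitK k); case: (split k) => j; by case: (cuv0 j).
Qed.

End SumDifference.

Section RationalEvaluation.
Variable F : numFieldType.

Definition ratr_eval (w : F) (P : {poly rat}) : F := (map_poly ratr P).[w].

Variable w : F.

Lemma ratr_evalD P Q : ratr_eval w (P + Q) = ratr_eval w P + ratr_eval w Q.
Proof. by rewrite /ratr_eval rmorphD hornerD. Qed.

Lemma ratr_evalN P : ratr_eval w (- P) = - ratr_eval w P.
Proof. by rewrite /ratr_eval rmorphN hornerN. Qed.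

Lemma ratr_evalM P Q : ratr_eval w (P * Q) = ratr_eval w P * ratr_eval w Q.
Proof. by rewrite /ratr_eval rmorphM hornerM. Qed.

Lemma ratr_evalC c : ratr_eval w c%:P = ratr c.
Proof. by rewrite /ratr_eval map_polyC hornerC. Qed.

Lemma ratr_evalX : ratr_eval w 'X = w.
Proof. by rewrite /ratr_eval map_polyX hornerX. Qed.

Lemma Qspan_ratr_eval m (b : 'I_m -> F) P :
  (forall k, Qspan b (w ^+ k)) -> Qspan b (ratr_eval w P).
Proof.
move=> Sw; rewrite /ratr_eval horner_coef; apply: Qspan_sum => i _.
by rewrite coef_map; apply: QspanZ.
Qed.

Variable p : {poly rat}.
Hypotheses (p_irr : irreducible_poly p) (p_w : ratr_eval w p = 0).

Lemma ratr_eval_coprime P : ~~ (p %| P) ->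
  exists Q c, c != 0 /\ ratr_eval w Q * ratr_eval w P = ratr c.
Proof.
rewrite -(irreducible_poly_coprime P p_irr) => /Bezout_coprimepP[[u v] /= uv1].
have /size_poly1P[c c0 uvc] : size (u * p + v * P) == 1%N.
  by rewrite (eqp_size uv1) size_poly1.
exists v, c; split=> //.
by rewrite -ratr_evalC -uvc ratr_evalD !ratr_evalM p_w mulr0 add0r.
Qed.

Lemma ratr_eval_eq0 P : ratr_eval w P = 0 -> p %| P.
Proof.
move=> P_w; apply/negPn/negP => /ratr_eval_coprime[Q [c [c0]]].
by rewrite P_w mulr0 => /esym/eqP; rewrite fmorph_eq0 (negPf c0).
Qed.

Lemma ratr_eval_inv P : ratr_eval w P != 0 -> exists Q, ratr_eval w Q * ratr_eval w P = 1.
Proof.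
move=> P_w; have [|Q [c [c0 QPc]]] := ratr_eval_coprime (P := P).
  by apply: contra P_w => /dvdpP[Q ->]; rewrite ratr_evalM p_w mulr0.
exists (c^-1%:P * Q); rewrite ratr_evalM -mulrA QPc ratr_evalC fmorphV mulVf //.
by rewrite fmorph_eq0.
Qed.

(* The exponents of distinct powers become distinct coefficients of a polynomial
   of degree less than [p] that vanishes at [w]. *)
Lemma Q_free_powers k (f : 'I_k -> nat) : w != 0 -> injective f ->
  (forall i, (0 < f i < size p)%N) -> Q_free (fun i => w ^+ f i).
Proof.
move=> w_neq0 f_inj f_range c sum_c0.
pose P := \sum_(i < k) c i *: 'X^((f i).-1).
have coefP j : P`_j = \sum_(i | (f i).-1 == j) c i by rewrite coef_sumMXn.
have /ratr_eval_eq0 pP : ratr_eval w P = 0.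
  apply: (mulIf w_neq0); rewrite mul0r -[RHS]sum_c0 /ratr_eval rmorph_sum horner_sum.
  rewrite mulr_suml; apply: eq_bigr => i _.
  rewrite /= map_polyZ map_polyXn hornerZ hornerXn -mulrA -exprSr prednK //.
  by case/andP: (f_range i).
have P0 : P = 0.
  apply: contraTeq pP => P_neq0; apply/negP => /(dvdp_leq P_neq0); apply/negP.
  rewrite -ltnNge; apply: leq_trans (_ : (size p).-1 < size p)%N.
    apply/leq_sizeP => j le_j; rewrite coefP big_pred0 // => i.
    by apply/negbTE; have := f_range i; lia.
  by rewrite prednK // (ltn_trans _ p_irr.1).
move=> i; have := coefP (f i).-1; rewrite P0 coef0 (big_pred1 i) => [->//|j /=].
apply/eqP/eqP => [fij|-> //]; apply: f_inj.
by have := f_range i; have := f_range j; lia.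
Qed.

End RationalEvaluation.

Lemma sum_unity_root_eq0 (R : idomainType) n (w : R) :
  w ^+ n = 1 -> w != 1 -> \sum_(i < n) w ^+ i = 0.
Proof.
move=> wn w1; apply/eqP; have /eqP := subrX1 w n.
by rewrite wn subrr eq_sym mulf_eq0 subr_eq0 (negPf w1).
Qed.

Lemma prime_unity_root_primitive (R : idomainType) n (w : R) : prime n ->
  w ^+ n = 1 -> w != 1 -> n.-primitive_root w.
Proof.
move=> n_prime wn w1; have [d d_prim d_dvd] := prim_order_exists (prime_gt0 n_prime) wn.
have [_ /(_ d d_dvd)/orP[/eqP d1|/eqP <- //]] := primeP n_prime.
by move: (prim_expr_order d_prim); rewrite d1 expr1 => /eqP; rewrite (negPf w1).
Qed.

Definition geom_poly n : {poly rat} := \poly_(i < n) 1.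

Lemma size_geom_poly n : size (geom_poly n) = n.
Proof.
case: n => [|n]; first by rewrite /geom_poly poly_def big_ord0 size_poly0.
by apply: size_poly_eq; rewrite oner_eq0.
Qed.

Lemma ratr_eval_geom_poly (F : numFieldType) n (w : F) :
  ratr_eval w (geom_poly n) = \sum_(i < n) w ^+ i.
Proof.
rewrite /ratr_eval /geom_poly poly_def rmorph_sum horner_sum.
by apply: eq_bigr => i _; rewrite /= map_polyZ map_polyXn hornerZ hornerXn rmorph1 mul1r.
Qed.

(* A complex root of a factor of [geom_poly n] is a primitive [n]-th root of unity,
   whose minimal polynomial (the [n]-th cyclotomic polynomial) has size [n]. *)
Lemma geom_poly_irreducible n : prime n -> irreducible_poly (geom_poly n).
Proof.
move=> n_prime; have n_gt0 := prime_gt0 n_prime.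
have P_neq0 : geom_poly n != 0 by rewrite -size_poly_eq0 size_geom_poly -lt0n.
split=> [|q q_size q_dvd]; first by rewrite size_geom_poly prime_gt1.
have q_neq0 : q != 0 by apply: contraNneq P_neq0 => q0; move: q_dvd; rewrite q0 dvd0p.
have [w q_w] : exists w : algC, root (map_poly ratr q) w.
  by apply/closed_rootP; rewrite size_map_poly.
have P_w : \sum_(i < n) w ^+ i = 0.
  rewrite -ratr_eval_geom_poly; apply/eqP; apply: root_dvdp q_w.
  by rewrite dvdp_map.
have wn : w ^+ n = 1 by apply/eqP; rewrite -subr_eq0 subrX1 P_w mulr0.
have w1 : w != 1.
  apply: contra_eqN P_w => /eqP->; under eq_bigr do rewrite expr1n.
  by rewrite sumr_const card_ord pnatr_eq0 -lt0n.
have [mp [mp_w _] mp_dvd] := minCpolyP w.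
have size_mp : size mp = n.
  rewrite -(size_map_poly (ratr : rat -> algC)) -mp_w.
  rewrite (minCpoly_cyclotomic (prime_unity_root_primitive n_prime wn w1)).
  by rewrite size_cyclotomic totient_prime // prednK.
rewrite -dvdp_size_eqp //; apply/eqP/anti_leq.
rewrite (dvdp_leq P_neq0 q_dvd) /= size_geom_poly -{1}size_mp.
by apply: dvdp_leq q_neq0 _; rewrite -mp_dvd.
Qed.

Lemma Qspan_unity_powers (F : numFieldType) m (b : 'I_m -> F) n (w : F) :
  (0 < n)%N -> w ^+ n = 1 -> w != 1 ->
  (forall r, (0 < r < n)%N -> Qspan b (w ^+ r)) -> forall k, Qspan b (w ^+ k).
Proof.
case: n => // n _ wn w1 Sw k; rewrite -(expr_mod k wn).
have : (k %% n.+1 < n.+1)%N by rewrite ltn_mod.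
case: (k %% n.+1)%N => [_|r r_lt]; last by apply: Sw.
have -> : w ^+ 0 = 0 - \sum_(i < n) w ^+ i.+1.
  rewrite sub0r; apply/eqP; rewrite -addr_eq0.
  by have := sum_unity_root_eq0 wn w1; rewrite big_ord_recl => ->.
apply: QspanB (Qspan0 _) (Qspan_sum _ _) => i _; apply: Sw.
by have := ltn_ord i; lia.
Qed.

Section SubfieldGenerated.
Variables (R : realType) (z : R[i]).

Lemma Qadj_subfield : is_subfield (Qadj z).
Proof.
do ![split]; first by move=> K [].
- by move=> K [_ []].
- by move=> x y Kx Ky K HK Kz; apply: HK.2.2.1; [apply: Kx | apply: Ky].
- by move=> x Kx K HK Kz; apply: HK.2.2.2.1; apply: Kx.
- by move=> x y Kx Ky K HK Kz; apply: HK.2.2.2.2.1; [apply: Kx | apply: Ky].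
- by move=> x Kx x0 K HK Kz; apply: HK.2.2.2.2.2 => //; apply: Kx.
Qed.

Lemma Qadj_ratr_eval (p : {poly rat}) x : irreducible_poly p -> ratr_eval z p = 0 ->
  Qadj z x -> exists P, x = ratr_eval z P.
Proof.
move=> p_irr p_z /(_ (fun y => exists P, y = ratr_eval z P)); apply.
  2: by exists 'X; rewrite ratr_evalX.
do ![split].
- by exists 0%:P; rewrite ratr_evalC rmorph0.
- by exists 1%:P; rewrite ratr_evalC rmorph1.
- by move=> _ _ [P ->] [Q ->]; exists (P + Q); rewrite ratr_evalD.
- by move=> _ [P ->]; exists (- P); rewrite ratr_evalN.
- by move=> _ _ [P ->] [Q ->]; exists (P * Q); rewrite ratr_evalM.
move=> _ [P ->] P_neq0; have [Q QP1] := ratr_eval_inv p_irr p_z P_neq0.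
by exists Q; apply: (mulIf P_neq0); rewrite mulVf.
Qed.

End SubfieldGenerated.

Section Omega.
Local Open Scope complex_scope.
Variables (R : realType) (n : nat).
Hypotheses (n_prime : prime n) (n_odd : odd n).

Local Notation w := (omega R n).
Local Notation theta := (2 * pi / n%:R : R).

Lemma omega_expr k : w ^+ k = cos (k%:R * theta) +i* sin (k%:R * theta).
Proof.
elim: k => [|k IHk]; first by rewrite expr0 mul0r cos0 sin0.
have -> : k.+1%:R * theta = k%:R * theta + theta.
  by rewrite -addn1 natrD [_ * theta]mulrDl mul1r.
rewrite exprSr IHk cosD sinD.
by apply/eqP; rewrite eq_complex /= !eqxx /= addrC eqxx.
Qed.

Lemma n_theta : n%:R * theta = pi *+ 2.
Proof. by rewrite mulrC divfK ?mulr_natl // pnatr_eq0 -lt0n prime_gt0. Qed.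

Lemma omega_exprn : w ^+ n = 1.
Proof. by rewrite omega_expr n_theta cos2pi sin2pi. Qed.

Lemma omega_neq1 : w != 1.
Proof.
have n_gt2 : (2 < n)%N.
  by move: (prime_gt1 n_prime) n_odd; rewrite leq_eqVlt => /orP[/eqP <-|].
have : 0 < sin theta.
  apply: sin_gt0_pi; rewrite divr_gt0 ?mulr_gt0 ?pi_gt0 ?ltr0n ?prime_gt0 //=.
  by rewrite ltr_pdivrMr ?ltr0n ?prime_gt0 // mulrC ltr_pM2l ?pi_gt0 ?ltr_nat.
by apply: contraTneq => w1; rewrite -[sin _]/(complex.Im w) w1 ltxx.
Qed.

Lemma omega_neq0 : w != 0.
Proof.
apply: contra_eq_neq omega_exprn => ->.
by rewrite expr0n gtn_eqF ?prime_gt0 // eq_sym oner_neq0.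
Qed.

Lemma omega_exprB k : (k <= n)%N ->
  w ^+ (n - k) = (complex.Re (w ^+ k))%:C - 'i * (complex.Im (w ^+ k))%:C.
Proof.
move=> le_kn; rewrite omega_expr natrB // mulrBl n_theta cosB sinB cos2pi sin2pi omega_expr.
by apply/eqP; rewrite eq_complex /=; apply/andP; split; apply/eqP; ring.
Qed.

Let m := n.-1./2.

Lemma n_double : n = (m + m).+1.
Proof.
have n_gt0 := prime_gt0 n_prime.
have even_pred : odd n.-1 = false.
  by move: n_odd; rewrite -{1}(prednK n_gt0) oddS => /negPf.
by have := odd_double_half n.-1; rewrite even_pred -addnn -/m; lia.
Qed.

Local Notation Re_omega j := (complex.Re (w ^+ j.+1))%:C.
Local Notation Im_omega j := ('i * (complex.Im (w ^+ j.+1))%:C).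

Definition omega_exponent : 'I_(m + m) -> nat :=
  pair_family (fun j : 'I_m => j.+1) (fun j : 'I_m => (n - j.+1)%N).

Lemma omega_exponent_range k : (0 < omega_exponent k < n)%N.
Proof.
rewrite -(splitK k) /omega_exponent pair_familyE n_double.
by case: (split k) => j /=; have := ltn_ord j; lia.
Qed.

Lemma omega_exponent_inj : injective omega_exponent.
Proof.
move=> k1 k2; rewrite -(splitK k1) -(splitK k2) /omega_exponent !pair_familyE n_double.
case: (split k1) (split k2) => [j1|j1] [j2|j2] /=;
  have := ltn_ord j1; have := ltn_ord j2; try lia.
- by move=> _ _ e12; congr (unsplit (inl _)); apply: ord_inj; lia.
- by move=> lt2 lt1 e12; congr (unsplit (inr _)); apply: ord_inj; lia.
Qed.

Lemma omega_exponent_onto r : (0 < r < n)%N -> exists k, omega_exponent k = r.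
Proof.
rewrite n_double => r_range; case: (leqP r m) => [le_rm|lt_mr].
  have lt_r1m : (r.-1 < m)%N by lia.
  by exists (lshift m (Ordinal lt_r1m)); rewrite /omega_exponent pair_family_lshift /=; lia.
have lt_m : ((m + m).+1 - r.+1 < m)%N by lia.
by exists (rshift m (Ordinal lt_m)); rewrite /omega_exponent pair_family_rshift n_double /=; lia.
Qed.

Lemma omega_power_lshift (j : 'I_m) :
  w ^+ omega_exponent (lshift m j) = Re_omega j + Im_omega j.
Proof. by rewrite /omega_exponent pair_family_lshift -complexE. Qed.

Lemma omega_power_rshift (j : 'I_m) :
  w ^+ omega_exponent (rshift m j) = Re_omega j - Im_omega j.
Proof.
rewrite /omega_exponent pair_family_rshift omega_exprB //.
by rewrite n_double; have := ltn_ord j; lia.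
Qed.

Local Notation omega_powers := (fun k => w ^+ omega_exponent k).

Lemma omega_root_geom_poly : ratr_eval w (geom_poly n) = 0.
Proof. by rewrite ratr_eval_geom_poly (sum_unity_root_eq0 omega_exprn omega_neq1). Qed.

Let geom_irr := geom_poly_irreducible n_prime.

Lemma AB_family_mem k : Qadj w (@AB_family R n k).
Proof.
have [_ [Q1 [QD [QN [QM QV]]]]] := Qadj_subfield w.
have Qw i : Qadj w (w ^+ i).
  by elim: i => [|i IHi]; rewrite ?expr0 // exprS; apply: QM => // K _.
have Q2V : Qadj w 2^-1 by apply: QV; [rewrite -[2]/(1 + 1); apply: QD | rewrite pnatr_eq0].
rewrite /AB_family; case: (split k) => j.
all: pose s := w ^+ omega_exponent (lshift m j); pose d := w ^+ omega_exponent (rshift m j).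
all: have [Qs Qd] : Qadj w s /\ Qadj w d by split; apply: Qw.
- have -> : Re_omega j = (s + d) * 2^-1.
    by rewrite /s /d omega_power_lshift omega_power_rshift; field.
  by apply: QM => //; apply: QD.
- have -> : Im_omega j = (s - d) * 2^-1.
    by rewrite /s /d omega_power_lshift omega_power_rshift; field.
  by apply: QM => //; apply: QD => //; apply: QN.
Qed.

Lemma AB_family_free : Q_free (@AB_family R n).
Proof.
apply: (Q_free_sum_diff (b := omega_powers) omega_power_lshift omega_power_rshift).
apply: (Q_free_powers geom_irr omega_root_geom_poly omega_neq0 omega_exponent_inj) => k.
by rewrite size_geom_poly omega_exponent_range.
Qed.

Lemma AB_family_span x : Qadj w x -> Qspan (@AB_family R n) x.
Proof.
case/(Qadj_ratr_eval geom_irr omega_root_geom_poly) => P ->.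
apply: (Qspan_sum_diff (b := omega_powers) omega_power_lshift omega_power_rshift).
apply/Qspan_ratr_eval/(Qspan_unity_powers (prime_gt0 n_prime) omega_exprn omega_neq1) => r.
by case/omega_exponent_onto => k <-; apply: Qspan_gen.
Qed.

End Omega.

Theorem lemma5 (R : realType) (n : nat) (Hn : prime n) (Hodd : odd n) :
  is_Q_basis (Qadj (omega R n)) (@AB_family R n).
Proof.
split; [exact: AB_family_mem | exact: AB_family_free | exact: AB_family_span].
Qed.
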